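(* Let $\mathcal{X}\subseteq\mathbb{R}^n$ be a nonempty closed convex set with Euclidean projection $\Pi_{\mathcal{X}}$, let $\Theta\subseteq\mathbb{R}^m$, and let $f:\mathbb{R}^n\times\mathbb{R}^m\to\mathbb{R}$ be differentiable and convex in its first argument. Assume: (A1) there is $G>0$ with $|f(x,\theta)-f(y,\theta)|\le G\|x-y\|$ for all $x,y\in\mathcal{X}$, $\theta\in\Theta$; (A2) there is $L>0$ with $f(y,\theta)\le f(x,\theta)+\nabla_x f(x,\theta)^T(y-x)+\frac{L}{2}\|y-x\|^2$ for all $x,y\in\mathcal{X}$, $\theta\in\Theta$; (A3) there is $\lambda>0$ with $f(y,\theta)\ge f(x,\theta)+\nabla_x f(x,\theta)^T(y-x)+\frac{\lambda}{2}\|y-x\|^2$ for all $x,y\in\mathcal{X}$, $\theta\in\Theta$; (A4) there is $C_\theta>0$ with $\|\nabla_x f(x,\theta_1)-\nabla_x f(x,\theta_2)\|\le C_\theta\|\theta_1-\theta_2\|$ for all $x\in\mathcal{X}$, $\theta_1,\theta_2\in\Theta$. Let $\theta_1,\dots,\theta_T\in\Theta$ and, for $t=2,\dots,T$, let $\hat\theta_t\in\Theta$ be a prediction of $\theta_t$ made from $\theta_1,\dots,\theta_{t-1}$. Fix an integer $k\ge1$, $\eta>0$, $x_1\in\mathcal{X}$, and for $t=1,\dots,T-1$ define $x_{t+1}$ by performing $k$ predicted projected gradient steps: $z^0=x_t$, $z^{j}=\Pi_{\mathcal{X}}\big(z^{j-1}-\eta\nabla_x f(z^{j-1},\hat\theta_{t+1})\big)$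 for $j=1,\dots,k$, and $x_{t+1}=z^k$. If $\eta\le 1/L$, then with $C_{\eta,\lambda}=\sqrt{1-\frac{2\lambda\eta}{1+\eta\lambda}}$, $$\mathbf{Reg}_D(\{x_t\})\le \frac{G\|x_1-x_1^\ast\|}{1-C_{\eta,\lambda}^k}+\frac{G\,C_{\eta,\lambda}^k}{1-C_{\eta,\lambda}^k}\mathcal{P}^\ast+\frac{G\eta C_\theta}{1-C_{\eta,\lambda}}P^\theta .$$
   Context: Write $x_t^\ast=\arg\min_{x\in\mathcal{X}}f(x,\theta_t)$. The dynamic regret is $\mathbf{Reg}_D(\{x_t\})=\sum_{t=1}^T\big(f(x_t,\theta_t)-\min_{x\in\mathcal{X}}f(x,\theta_t)\big)$. The path length is $\mathcal{P}^\ast=\sum_{t=1}^{T-1}\|x_t^\ast-x_{t+1}^\ast\|$, and the parameter prediction regularity is $P^\theta=\sum_{t=2}^T\|\theta_t-\hat\theta_t\|$. All norms are Euclidean. *)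

From HB Require Import structures.
From mathcomp Require Import all_boot all_order all_algebra.
From mathcomp Require Import all_classical all_reals all_analysis.
Set Implicit Arguments. Unset Strict Implicit. Unset Printing Implicit Defensive.
Import Order.TTheory GRing.Theory Num.Theory.
Import numFieldNormedType.Exports.
Local Open Scope classical_set_scope.
Local Open Scope ring_scope.

Definition dotv {R : realType} {n : nat} (u v : 'rV[R]_n) : R :=
  \sum_(i < n) u ord0 i * v ord0 i.
Definition enorm {R : realType} {n : nat} (u : 'rV[R]_n) : R :=
  Num.sqrt (dotv u u).

Definition is_convex_set {R : realType} {n : nat} (X : set 'rV[R]_n) : Prop :=
  forall x y (a : R), X x -> X y -> 0 <= a <= 1 -> X (a *: x + (1 - a) *: y).

Definition is_euclid_proj {R : realType} {n : nat} (X : set 'rV[R]_n)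
  (proj : 'rV[R]_n -> 'rV[R]_n) : Prop :=
  forall y, X (proj y) /\ forall x, X x -> enorm (y - proj y) <= enorm (y - x).

Definition pgd_step {R : realType} {n m : nat} (proj : 'rV[R]_n -> 'rV[R]_n)
  (grad : 'rV[R]_n -> 'rV[R]_m -> 'rV[R]_n) (eta : R) (th : 'rV[R]_m)
  (z : 'rV[R]_n) : 'rV[R]_n :=
  proj (z - eta *: grad z th).

(* Iterates x_t (t >= 1): x_1 = x1, x_{t+1} = (k steps with thhat_{t+1}) x_t.
   Index 0 is unused (set to x1). *)
Fixpoint iterates {R : realType} {n m : nat} (proj : 'rV[R]_n -> 'rV[R]_n)
  (grad : 'rV[R]_n -> 'rV[R]_m -> 'rV[R]_n) (eta : R) (k : nat)
  (thhat : nat -> 'rV[R]_m) (x1 : 'rV[R]_n) (t : nat) : 'rV[R]_n :=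
  match t with
  | 0 | 1 => x1
  | t'.+1 => iter k (pgd_step proj grad eta (thhat t)) (iterates proj grad eta k thhat x1 t')
  end.

From HB Require Import structures.
From mathcomp Require Import all_boot all_order all_algebra.
From mathcomp Require Import all_classical all_reals all_analysis.
From mathcomp Require Import ring lra.
Import Order.TTheory GRing.Theory Num.Theory.
Import numFieldNormedType.Exports.
Local Open Scope classical_set_scope.
Local Open Scope ring_scope.

(* Each step [z |-> proj (z - eta grad_x f(z, thhat))] is compared with the exact step at the
   current parameter [th].  Smoothness, strong convexity, first-order optimality of the minimiser
   [xs] and the obtuse-angle property of the projection give
   [(1 + eta lam) |y - xs|^2 <= (1 - eta lam) |z - xs|^2] for the exact step, i.e. a contraction
   with factor [C]; using the predicted parameter costs at most [eta Cth |th - thhat|] because the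
   projection is nonexpansive.  Hence [e_t = |x_t - xs_t|] satisfies
   [e_(t+1) <= C^k (e_t + |xs_t - xs_(t+1)|) + eta Cth |th_(t+1) - thhat_(t+1)| (1 - C^k) / (1 - C)];
   summing this recursion bounds [sum e_t], and by Lipschitz continuity the regret is at most
   [G sum e_t]. *)

Section EuclideanGeometry.
Context {R : realType} {n : nat}.
Implicit Types (a : R) (u v w : 'rV[R]_n).

Lemma dotvC u v : dotv u v = dotv v u.
Proof. by apply: eq_bigr => i _; rewrite mulrC. Qed.

Lemma dotvDl u v w : dotv (u + v) w = dotv u w + dotv v w.
Proof. by rewrite /dotv -big_split; apply: eq_bigr => i _; rewrite mxE mulrDl. Qed.

Lemma dotvNl u v : dotv (- u) v = - dotv u v.
Proof. by rewrite /dotv -sumrN; apply: eq_bigr => i _; rewrite mxE mulNr. Qed.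

Lemma dotvZl a u v : dotv (a *: u) v = a * dotv u v.
Proof. by rewrite /dotv mulr_sumr; apply: eq_bigr => i _; rewrite mxE mulrA. Qed.

Lemma dotvBl u v w : dotv (u - v) w = dotv u w - dotv v w.
Proof. by rewrite dotvDl dotvNl. Qed.

Lemma dotvDr u v w : dotv u (v + w) = dotv u v + dotv u w.
Proof. by rewrite dotvC dotvDl !(dotvC u). Qed.

Lemma dotvNr u v : dotv u (- v) = - dotv u v.
Proof. by rewrite dotvC dotvNl dotvC. Qed.

Lemma dotvZr a u v : dotv u (a *: v) = a * dotv u v.
Proof. by rewrite dotvC dotvZl dotvC. Qed.

Lemma dotvBr u v w : dotv u (v - w) = dotv u v - dotv u w.
Proof. by rewrite dotvDr dotvNr. Qed.

Lemma dotvvB u v : dotv (u - v) (u - v) = dotv u u - 2 * dotv u v + dotv v v.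
Proof. by rewrite !(dotvBl, dotvBr) (dotvC v u); ring. Qed.

Lemma dotvv_ge0 u : 0 <= dotv u u.
Proof. by apply: sumr_ge0 => i _; rewrite -expr2 sqr_ge0. Qed.

Lemma enorm_ge0 u : 0 <= enorm u.
Proof. exact: sqrtr_ge0. Qed.

Lemma enorm_sqr u : enorm u ^+ 2 = dotv u u.
Proof. by rewrite sqr_sqrtr // dotvv_ge0. Qed.

Lemma enorm_eq0_dotv u v : enorm u = 0 -> dotv u v = 0.
Proof.
move=> u0; have uu0 : dotv u u = 0 by rewrite -enorm_sqr u0 expr0n.
rewrite /dotv big1 // => i _.
have /eqP : u ord0 i * u ord0 i = 0.
  by apply: (psumr_eq0P _ uu0) => // j _; rewrite -expr2 sqr_ge0.
by rewrite mulf_eq0 orbb => /eqP ->; rewrite mul0r.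
Qed.

Lemma cauchy_schwarz u v : dotv u v <= enorm u * enorm v.
Proof.
have [u0|u0] := eqVneq (enorm u) 0; first by rewrite enorm_eq0_dotv // u0 mul0r.
have [v0|v0] := eqVneq (enorm v) 0.
  by rewrite dotvC enorm_eq0_dotv // v0 mulr0.
set a := enorm u in u0 *; set b := enorm v in v0 *.
have ab_gt0 : 0 < a * b by rewrite mulr_gt0 // lt0r ?u0 ?v0 ?enorm_ge0.
(* [|b u - a v|^2 = 2 a b (a b - <u, v>)] for [a = |u|], [b = |v|] *)
have := dotvv_ge0 (b *: u - a *: v).
rewrite !(dotvBl, dotvBr, dotvZl, dotvZr) -!enorm_sqr (dotvC v u) -/a -/b.
nra.
Qed.

Lemma enormD u v : enorm (u + v) <= enorm u + enorm v.
Proof.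
rewrite -(@ler_pXn2r R 2) // ?nnegrE ?addr_ge0 ?enorm_ge0 //.
rewrite enorm_sqr dotvDl !dotvDr (dotvC v u) -!enorm_sqr.
have := cauchy_schwarz u v; nra.
Qed.

Lemma enormZ a u : 0 <= a -> enorm (a *: u) = a * enorm u.
Proof.
move=> a_ge0; rewrite /enorm dotvZl dotvZr mulrA sqrtrM ?mulr_ge0 //.
by rewrite -expr2 sqrtr_sqr ger0_norm.
Qed.

Lemma ler_enorm u v : (enorm u <= enorm v) = (dotv u u <= dotv v v).
Proof. by rewrite -!enorm_sqr ler_pXn2r // nnegrE enorm_ge0. Qed.

End EuclideanGeometry.

Lemma ge0_linear_term {R : realFieldType} (D M : R) : 0 <= M ->
  (forall a, 0 < a <= 1 -> 0 <= a * D + a ^+ 2 * M) -> 0 <= D.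
Proof.
move=> M_ge0 small; rewrite leNgt; apply/negP => D_lt0.
(* at [a = -D / (M - D)] the quadratic equals [a^2 D < 0] *)
have MD_gt0 : 0 < M - D by lra.
set a := - D / (M - D).
have a_gt0 : 0 < a by rewrite divr_gt0 // oppr_gt0.
have a_le1 : a <= 1 by rewrite ler_pdivrMr // mul1r; lra.
have aMD : a * (M - D) = - D by rewrite /a divfK // gt_eqF.
have := small a; rewrite a_gt0 a_le1 => /(_ isT).
have -> : a * D + a ^+ 2 * M = a ^+ 2 * D.
  have aM : a * M = - D + a * D by rewrite -aMD; ring.
  by rewrite expr2 -mulrA aM; ring.
by rewrite pmulr_rge0 ?exprn_gt0 //; lra.
Qed.

Lemma ler_sqrt_mul {R : rcfType} (a b c : R) : 0 <= a -> 0 <= b ->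
  a <= c * b -> Num.sqrt a <= Num.sqrt c * Num.sqrt b.
Proof.
move=> a_ge0 b_ge0 abc; have [c_ge0|c_lt0] := leP 0 c.
  by rewrite -sqrtrM // ler_sqrt // mulr_ge0.
have -> : a = 0 by nra.
by rewrite sqrtr0 mulr_ge0 ?sqrtr_ge0.
Qed.

Section EuclideanProjection.
Context {R : realType} {n : nat} {X : set 'rV[R]_n} {proj : 'rV[R]_n -> 'rV[R]_n}.
Hypotheses (convX : is_convex_set X) (projX : is_euclid_proj X proj).

Lemma euclid_proj_obtuse w y : X y -> dotv (w - proj w) (y - proj w) <= 0.
Proof.
move=> Xy; have [Xp nearest] := projX w.
suff : 0 <= - 2 * dotv (w - proj w) (y - proj w) by nra.
apply: (ge0_linear_term _ _ (dotvv_ge0 (y - proj w))) => a /andP[a_gt0 a_le1].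
have Xz : X (a *: y + (1 - a) *: proj w) by apply: convX; rewrite ?(ltW a_gt0).
have := nearest _ Xz; rewrite ler_enorm.
have -> : w - (a *: y + (1 - a) *: proj w) = (w - proj w) - a *: (y - proj w).
  by apply/rowP => i; rewrite !mxE; ring.
rewrite [X in _ <= X]dotvvB !(dotvZl, dotvZr); nra.
Qed.

Lemma euclid_proj_nonexpansive a b : enorm (proj a - proj b) <= enorm (a - b).
Proof.
have ha := euclid_proj_obtuse a _ (proj1 (projX b)).
have hb := euclid_proj_obtuse b _ (proj1 (projX a)).
set p := proj a in ha hb *; set q := proj b in ha hb *.
have qp : q - p = - (p - q) by rewrite opprB.
rewrite qp dotvNr in ha.
have -> : a - b = ((a - p) - (b - q)) + (p - q).
  by apply/rowP => i; rewrite !mxE; ring.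
have ed : dotv ((a - p) - (b - q)) (p - q) = dotv (a - p) (p - q) - dotv (b - q) (p - q).
  exact: dotvBl.
set e := (a - p) - (b - q) in ed *; set d := p - q in ha hb ed *; clearbody e d.
rewrite ler_enorm dotvDl !dotvDr (dotvC d e).
have := dotvv_ge0 e; lra.
Qed.

End EuclideanProjection.

Lemma iter_perturbed_contraction {T : Type} {R : realDomainType} (P : T -> Prop)
    (F : T -> T) (d : T -> R) (c K : R) :
  0 <= c -> (forall z, P z -> P (F z)) -> (forall z, P z -> d (F z) <= c * d z + K) ->
  forall j z, P z -> d (iter j F z) <= c ^+ j * d z + K * \sum_(i < j) c ^+ i.
Proof.
move=> c_ge0 PF dF; elim=> [|j IHj] z Pz; first by rewrite big_ord0 expr0 mul1r mulr0 addr0.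
have Pj : P (iter j F z) by elim: j {IHj} => //= j; apply: PF.
rewrite iterS (le_trans (dF _ Pj)) // big_ord_recl expr0 exprS.
under eq_bigr => i _ do rewrite exprS.
rewrite -mulr_sumr.
have := ler_wpM2l c_ge0 (IHj z Pz); lra.
Qed.

Lemma sum_le_linear_recursion {R : realDomainType} (e p r : nat -> R) (c : R) (T : nat) :
  0 <= c -> (forall t, 0 <= e t) ->
  (forall t, (1 <= t < T)%N -> e t.+1 <= c * (e t + p t) + r t) ->
  (1 - c) * \sum_(1 <= t < T.+1) e t
    <= e 1%N + c * \sum_(1 <= t < T) p t + \sum_(1 <= t < T) r t.
Proof.
move=> c_ge0 e_ge0 rec; case: T rec => [|T] rec.
  by rewrite !big_geq // !mulr0 !addr0.
have shiftS : \sum_(1 <= t < T.+2) e t = e 1%N + \sum_(1 <= t < T.+1) e t.+1.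
  exact: big_nat_recl.
have dropT : \sum_(1 <= t < T.+1) e t <= \sum_(1 <= t < T.+2) e t.
  by rewrite [X in _ <= X]big_nat_recr //= lerDl.
have sum_rec : \sum_(1 <= t < T.+1) e t.+1
    <= c * (\sum_(1 <= t < T.+1) e t + \sum_(1 <= t < T.+1) p t) + \sum_(1 <= t < T.+1) r t.
  rewrite -big_split mulr_sumr -big_split /=.
  exact: ler_sum_nat.
have := ler_wpM2l c_ge0 dropT; lra.
Qed.

Lemma sum_le_geometric_recursion {R : realFieldType} (e p d : nat -> R) (c K : R) (k T : nat) :
  0 <= c < 1 -> (0 < k)%N -> (forall t, 0 <= e t) ->
  (forall t, (1 <= t < T)%N ->
     e t.+1 <= c ^+ k * (e t + p t) + K * d t * \sum_(i < k) c ^+ i) ->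
  \sum_(1 <= t < T.+1) e t
    <= e 1%N / (1 - c ^+ k) + c ^+ k / (1 - c ^+ k) * \sum_(1 <= t < T) p t
       + K / (1 - c) * \sum_(1 <= t < T) d t.
Proof.
move=> /andP[c_ge0 c_lt1] k_gt0 e_ge0 rec.
set S := \sum_(i < k) c ^+ i.
have geomS : 1 - c ^+ k = (1 - c) * S by rewrite -opprB subrX1 -mulNr opprB.
have ck_lt1 : 0 < 1 - c ^+ k by rewrite subr_gt0 exprn_ilt1 // -lt0n.
have S_gt0 : 0 < S by move: ck_lt1; rewrite geomS pmulr_rgt0 // subr_gt0.
have := sum_le_linear_recursion _ _ (fun t => K * d t * S) _ _ (exprn_ge0 k c_ge0) e_ge0 rec.
rewrite -mulr_suml -mulr_sumr -ler_pdivlMl // => /le_trans; apply.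
rewrite le_eqVlt; apply/orP; left; apply/eqP.
by rewrite geomS; field; rewrite !gt_eqF // subr_gt0.
Qed.

Definition pgd_rate {R : realType} (lam eta : R) : R :=
  Num.sqrt (1 - 2 * lam * eta / (1 + eta * lam)).

Lemma pgd_rate_lt1 {R : realType} (lam eta : R) :
  0 < lam -> 0 < eta -> pgd_rate lam eta < 1.
Proof.
move=> lam_gt0 eta_gt0.
have step_gt0 : 0 < 2 * lam * eta / (1 + eta * lam).
  by rewrite divr_gt0 ?mulr_gt0 // ltr_wpDr // mulr_ge0 // ltW.
rewrite /pgd_rate -[ltRHS]sqrtr1 ltr_sqrt //; lra.
Qed.

Section Iterates.
Context {R : realType} {n m : nat} {proj : 'rV[R]_n -> 'rV[R]_n}.
Context {grad : 'rV[R]_n -> 'rV[R]_m -> 'rV[R]_n} {eta : R} {k : nat}.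
Context {thhat : nat -> 'rV[R]_m} {x1 : 'rV[R]_n}.

Lemma iteratesS t : (1 <= t)%N ->
  iterates proj grad eta k thhat x1 t.+1
  = iter k (pgd_step proj grad eta (thhat t.+1)) (iterates proj grad eta k thhat x1 t).
Proof. by case: t. Qed.

Lemma iterates_in {X : set 'rV[R]_n} t :
  is_euclid_proj X proj -> X x1 -> X (iterates proj grad eta k thhat x1 t).
Proof.
move=> projX Xx1; elim: t => [|[|t] IHt] //; rewrite iteratesS //.
move: (iterates _ _ _ _ _ _ _) IHt => z Xz.
by case: k => [|j] //=; exact: (proj1 (projX _)).
Qed.

End Iterates.

Section ProjectedGradientStep.
Context {R : realType} {n m : nat} {X : set 'rV[R]_n} {Theta : set 'rV[R]_m}.
Context {f : 'rV[R]_n -> 'rV[R]_m -> R} {grad : 'rV[R]_n -> 'rV[R]_m -> 'rV[R]_n}.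
Context {L lam : R}.
Hypothesis convX : is_convex_set X.
Hypothesis L_gt0 : 0 < L.
Hypothesis smooth : forall x y p, X x -> X y -> Theta p ->
  f y p <= f x p + dotv (grad x p) (y - x) + L / 2 * enorm (y - x) ^+ 2.
Hypothesis strongly_convex : forall x y p, X x -> X y -> Theta p ->
  f x p + dotv (grad x p) (y - x) + lam / 2 * enorm (y - x) ^+ 2 <= f y p.
Hypothesis lam_gt0 : 0 < lam.

Lemma minimizer_first_order p xs y : Theta p -> X xs ->
  (forall x, X x -> f xs p <= f x p) -> X y -> 0 <= dotv (grad xs p) (y - xs).
Proof.
move=> Tp Xxs xs_min Xy.
apply: (ge0_linear_term _ (L / 2 * dotv (y - xs) (y - xs))).
  by rewrite mulr_ge0 ?dotvv_ge0 // divr_ge0 // ltW.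
move=> a /andP[a_gt0 a_le1].
have Xz : X (a *: y + (1 - a) *: xs) by apply: convX; rewrite ?(ltW a_gt0).
have := smooth _ _ _ Xxs Xz Tp; have := xs_min _ Xz.
have -> : a *: y + (1 - a) *: xs - xs = a *: (y - xs).
  by apply/rowP => i; rewrite !mxE; ring.
rewrite enorm_sqr !(dotvZl, dotvZr) expr2; lra.
Qed.

Context {proj : 'rV[R]_n -> 'rV[R]_n} {eta : R}.
Hypothesis projX : is_euclid_proj X proj.
Hypothesis eta_gt0 : 0 < eta.
Hypothesis eta_le_invL : eta <= 1 / L.

Lemma pgd_step_sqr_contract p xs z : Theta p -> X xs ->
  (forall x, X x -> f xs p <= f x p) -> X z ->
  (1 + eta * lam) * dotv (pgd_step proj grad eta p z - xs) (pgd_step proj grad eta p z - xs)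
  <= (1 - eta * lam) * dotv (z - xs) (z - xs).
Proof.
move=> Tp Xxs xs_min Xz; rewrite /pgd_step.
set w := z - eta *: grad z p; set y := proj w.
have Xy : X y := proj1 (projX w).
have := smooth _ _ _ Xz Xy Tp; have := strongly_convex _ _ _ Xz Xxs Tp.
have := strongly_convex _ _ _ Xxs Xy Tp; have := minimizer_first_order _ _ _ Tp Xxs xs_min Xy.
have := euclid_proj_obtuse convX projX w _ Xxs; rewrite -/y.
have -> : w - y = (z - xs) - (y - xs) - eta *: grad z p.
  by apply/rowP => i; rewrite !mxE; ring.
have -> : xs - y = - (y - xs) by rewrite opprB.
have -> : xs - z = - (z - xs) by rewrite opprB.
have -> : y - z = (y - xs) - (z - xs) by apply/rowP => i; rewrite !mxE; ring.
set u := z - xs; set v := y - xs; set g := grad z p; clearbody u v g.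
rewrite !enorm_sqr !dotvvB !(dotvNl, dotvNr, dotvBl, dotvBr, dotvZl) opprK.
rewrite (dotvC v u) => obtuse first_order strong_y strong_z smooth_y.
have etaL : eta * L <= 1 by rewrite -ler_pdivlMr.
have := dotvv_ge0 (v - u); rewrite dotvvB (dotvC v u) => vu_ge0.
have descent : lam / 2 * dotv v v
    <= dotv g v + L / 2 * (dotv v v - 2 * dotv u v + dotv u u) - lam / 2 * dotv u u.
  by lra.
(* [eta] times [descent], with [eta L <= 1] and the obtuse angle at [y] *)
have := ler_wpM2l (ltW eta_gt0) descent.
have : 0 <= (1 - eta * L) * (dotv v v - 2 * dotv u v + dotv u u).
  by rewrite mulr_ge0 // subr_ge0.
nra.
Qed.

Lemma pgd_step_contract p xs z : Theta p -> X xs ->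
  (forall x, X x -> f xs p <= f x p) -> X z ->
  enorm (pgd_step proj grad eta p z - xs) <= pgd_rate lam eta * enorm (z - xs).
Proof.
move=> Tp Xxs xs_min Xz.
have etalam_gt0 : 0 < 1 + eta * lam by rewrite ltr_wpDr // mulr_ge0 // ltW.
apply: ler_sqrt_mul; rewrite ?dotvv_ge0 // -(ler_pM2l etalam_gt0).
have -> : (1 + eta * lam) * ((1 - 2 * lam * eta / (1 + eta * lam)) * dotv (z - xs) (z - xs))
    = (1 - eta * lam) * dotv (z - xs) (z - xs).
  by field; rewrite gt_eqF.
exact: pgd_step_sqr_contract.
Qed.

Context {Cth : R}.
Hypothesis grad_lipschitz_param : forall x p1 p2, X x -> Theta p1 -> Theta p2 ->
  enorm (grad x p1 - grad x p2) <= Cth * enorm (p1 - p2).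

Lemma pgd_step_predicted p q xs z : Theta p -> Theta q -> X xs ->
  (forall x, X x -> f xs p <= f x p) -> X z ->
  enorm (pgd_step proj grad eta q z - xs)
    <= pgd_rate lam eta * enorm (z - xs) + eta * Cth * enorm (p - q).
Proof.
move=> Tp Tq Xxs xs_min Xz.
have -> : pgd_step proj grad eta q z - xs
    = (pgd_step proj grad eta p z - xs) + (proj (z - eta *: grad z q) - proj (z - eta *: grad z p)).
  by apply/rowP => i; rewrite !mxE; ring.
apply: (le_trans (enormD _ _)); apply: lerD; first exact: pgd_step_contract.
apply: (le_trans (euclid_proj_nonexpansive convX projX _ _)).
have -> : z - eta *: grad z q - (z - eta *: grad z p) = eta *: (grad z p - grad z q).
  by apply/rowP => i; rewrite !mxE; ring.
by rewrite enormZ ?(ltW eta_gt0) // -mulrA ler_pM2l // grad_lipschitz_param.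
Qed.

Lemma iterates_tracking k thhat x1 xs0 xs p t : (1 <= t)%N ->
  Theta p -> Theta (thhat t.+1) -> X x1 -> X xs -> (forall x, X x -> f xs p <= f x p) ->
  enorm (iterates proj grad eta k thhat x1 t.+1 - xs)
  <= pgd_rate lam eta ^+ k * (enorm (iterates proj grad eta k thhat x1 t - xs0) + enorm (xs0 - xs))
     + eta * Cth * enorm (p - thhat t.+1) * \sum_(i < k) pgd_rate lam eta ^+ i.
Proof.
move=> t_ge1 Tp Tq Xx1 Xxs xs_min; rewrite iteratesS //.
set F := pgd_step proj grad eta (thhat t.+1); set z := iterates _ _ _ _ _ _ t.
have Xz : X z := iterates_in t projX Xx1.
have step y : X y -> enorm (F y - xs) <= pgd_rate lam eta * enorm (y - xs)
    + eta * Cth * enorm (p - thhat t.+1).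
  exact: pgd_step_predicted.
apply: (le_trans (iter_perturbed_contraction X F (fun y => enorm (y - xs)) _ _
  (sqrtr_ge0 _) (fun y _ => proj1 (projX _)) step k z Xz)).
rewrite lerD2r ler_wpM2l ?exprn_ge0 ?sqrtr_ge0 //.
have -> : z - xs = (z - xs0) + (xs0 - xs) by apply/rowP => i; rewrite !mxE; ring.
exact: enormD.
Qed.

End ProjectedGradientStep.

Theorem corollary1 (R : realType) (n m : nat)
  (X : set 'rV[R]_n) (Theta : set 'rV[R]_m)
  (proj : 'rV[R]_n -> 'rV[R]_n)
  (f : 'rV[R]_n -> 'rV[R]_m -> R) (grad : 'rV[R]_n -> 'rV[R]_m -> 'rV[R]_n)
  (G L lam Cth : R) (T k : nat) (th thhat : nat -> 'rV[R]_m)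
  (eta : R) (x1 : 'rV[R]_n) (xstar : nat -> 'rV[R]_n) :
  X !=set0 -> closed X -> is_convex_set X ->
  is_euclid_proj X proj ->
  (forall p x, differentiable (fun y => f y p) x) ->
  (forall p x v, 'd (fun y => f y p) x v = dotv (grad x p) v) ->
  (forall p x y (a : R), 0 <= a <= 1 ->
     f (a *: x + (1 - a) *: y) p <= a * f x p + (1 - a) * f y p) ->
  0 < G -> (forall x y p, X x -> X y -> Theta p ->
     `|f x p - f y p| <= G * enorm (x - y)) ->
  0 < L -> (forall x y p, X x -> X y -> Theta p ->
     f y p <= f x p + dotv (grad x p) (y - x) + L / 2 * enorm (y - x) ^+ 2) ->
  0 < lam -> (forall x y p, X x -> X y -> Theta p ->
     f x p + dotv (grad x p) (y - x) + lam / 2 * enorm (y - x) ^+ 2 <= f y p) ->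
  0 < Cth -> (forall x p1 p2, X x -> Theta p1 -> Theta p2 ->
     enorm (grad x p1 - grad x p2) <= Cth * enorm (p1 - p2)) ->
  (forall t, (1 <= t <= T)%N -> Theta (th t)) ->
  (forall t, (2 <= t <= T)%N -> Theta (thhat t)) ->
  (forall t, (1 <= t <= T)%N ->
     X (xstar t) /\ forall x, X x -> f (xstar t) (th t) <= f x (th t)) ->
  (1 <= k)%N -> 0 < eta -> X x1 -> eta <= 1 / L ->
  let x := iterates proj grad eta k thhat x1 in
  let C := Num.sqrt (1 - 2 * lam * eta / (1 + eta * lam)) in
  \sum_(1 <= t < T.+1) (f (x t) (th t) - f (xstar t) (th t))
  <= G * enorm (x1 - xstar 1%N) / (1 - C ^+ k)
     + G * C ^+ k / (1 - C ^+ k) * (\sum_(1 <= t < T) enorm (xstar t - xstar t.+1))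
     + G * eta * Cth / (1 - C) * (\sum_(2 <= t < T.+1) enorm (th t - thhat t)).
Proof.
(* (A2) and (A3) already provide every first-order fact used. *)
move=> _ _ convX projX _ _ _ G_gt0 lipschitz L_gt0 smooth lam_gt0 strongly_convex _
  grad_lipschitz th_in thhat_in xstar_min k_ge1 eta_gt0 Xx1 eta_le_invL; cbv zeta.
set x := iterates proj grad eta k thhat x1; set C := Num.sqrt _.
have Xx t : X (x t) := iterates_in t projX Xx1.
set e := fun t => enorm (x t - xstar t).
have rec t : (1 <= t < T)%N -> e t.+1 <= C ^+ k * (e t + enorm (xstar t - xstar t.+1))
    + eta * Cth * enorm (th t.+1 - thhat t.+1) * \sum_(i < k) C ^+ i.
  case/andP=> t_ge1 t_ltT; have [Xxs xs_min] := xstar_min t.+1 t_ltT.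
  apply: (iterates_tracking convX L_gt0 smooth strongly_convex lam_gt0 projX
    eta_gt0 eta_le_invL grad_lipschitz) => //; first exact: th_in.
  by apply: thhat_in; rewrite ltnS t_ge1.
have regret : \sum_(1 <= t < T.+1) (f (x t) (th t) - f (xstar t) (th t))
    <= G * \sum_(1 <= t < T.+1) e t.
  rewrite mulr_sumr; apply: ler_sum_nat => t /andP[t_ge1 t_leT].
  have t_in : (1 <= t <= T)%N by rewrite t_ge1 -ltnS.
  have [Xxs _] := xstar_min t t_in.
  exact: (le_trans (ler_norm _) (lipschitz _ _ _ (Xx t) Xxs (th_in t t_in))).
have C_bounds : 0 <= C < 1 by rewrite sqrtr_ge0 (pgd_rate_lt1 _ _ lam_gt0 eta_gt0).
have := sum_le_geometric_recursion e (fun t => enorm (xstar t - xstar t.+1))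
  (fun t => enorm (th t.+1 - thhat t.+1)) _ _ _ _ C_bounds k_ge1 (fun t => enorm_ge0 _) rec.
move=> /(ler_wpM2l (ltW G_gt0)) /(le_trans regret).
by rewrite [\sum_(2 <= t < T.+1) _]big_add1 /= !mulrDr !mulrA.
Qed.
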